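(* Let $\mathcal P=(P,T,F,\lambda)$ be a labelled Petri net with finite sets of places $P$ and transitions $T$, and let $X=X_{\mathcal P}$ be the associated $(\square(\Sigma)\times\mathbb N^P)$-presheaf. Then the sub-presheaf $X_{nac}$ and, for every $d\ge1$, the sub-presheaf $X_{\le d}$ of $X$ are finitely generated. Consequently, equipped with any finite sets of start and accept elements, they are higher-dimensional automata with counters of finite type.
   Context: Fix an alphabet $\Sigma$. $\square(\Sigma)$ is the category whose objects are finite words $a_1\cdots a_n$ over $\Sigma$ ($n\ge0$) and whose morphisms $V\to U$ (with $|V|=m$, $|U|=n$) are pairs $(f,\varepsilon)$ with $f:\{1,\dots,m\}\to\{1,\dots,n\}$ strictly increasing and letter-preserving and $\varepsilon:\{1,\dots,n\}\setminus f(\{1,\dots,m\})\to\{0,1\}$; composition of $(g,\eta):W\to V$ and $(f,\varepsilon):V\to U$ is $(fg,\theta)$ with $\theta(u)=\varepsilon(u)$ for $u\notin f(V)$ and $\theta(u)=\eta(f^{-1}(u))$ otherwise. For $U=a_1\cdots a_n$, $1\le i\le n$, $\varepsilon\in\{0,1\}$, $d^\varepsilon_i:a_1\cdots a_{i-1}a_{i+1}\cdots a_n\to U$ omits position $i$ with value $\varepsilon$ there; these generate all morphisms. The monoid $\mathbb N^P$ is viewed as a one-object category, and $\square(\Sigma)\times\mathbb N^P$ is the product category (objects: words; morphisms: pairs $(\varphi,\mathsf w)$). A labelled Petri net: places $P$, transitions $T$, flow $F\subseteq(P\times T)\sqcup(T\times P)$, labelling $\lambda:T\to\Sigma$; $\mathsf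 a(t),\mathsf b(t)\in\{0,1\}^P\subseteq\mathbb N^P$ with $\mathsf a(t)_p=1$ iff $(p,t)\in F$, $\mathsf b(t)_p=1$ iff $(t,p)\in F$. $X_{\mathcal P}$ assigns to a word $U$ the set of $(t_1,\dots,t_n;\mathsf v)$ with $t_i\in T$, $\lambda(t_1)\cdots\lambda(t_n)=U$, $\mathsf v\in\mathbb N^P$, with $X[(\mathrm{id},\mathsf w)](\mathbf t;\mathsf v)=(\mathbf t;\mathsf v+\mathsf w)$, $X[(d^0_i,\mathsf w)](t_1,\dots,t_n;\mathsf v)=(t_1,\dots,t_{i-1},t_{i+1},\dots,t_n;\mathsf v+\mathsf a(t_i)+\mathsf w)$ and $X[(d^1_i,\mathsf w)](t_1,\dots,t_n;\mathsf v)=(t_1,\dots,t_{i-1},t_{i+1},\dots,t_n;\mathsf v+\mathsf b(t_i)+\mathsf w)$. $X_{nac}$ consists of the elements $(t_1,\dots,t_n;\mathsf v)$ with the $t_i$ pairwise distinct; $X_{\le d}$ of those with $n\le d$. A presheaf $Z$ on a small category $\mathcal D$ is finitely generated if $Z\cong\operatorname{colim}_{e\in\mathcal E}\mathcal D(-,G(e))$ for some finite category $\mathcal E$ and functor $G:\mathcal E\to\mathcal D$. A higher-dimensional automaton with counters is such a presheaf with sets of start and accept elements; finite type means finitely generated with finitely many start and accept elements. *)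

From Stdlib Require Import Relation_Operators.
From Stdlib Require List.
From mathcomp Require Import all_boot.

Set Implicit Arguments.
Unset Strict Implicit.
Unset Printing Implicit Defensive.

Record FinCat := {
  fc_ob : finType;
  fc_hom : fc_ob -> fc_ob -> finType;
  fc_id : forall e, fc_hom e e;
  fc_comp : forall e1 e2 e3, fc_hom e2 e3 -> fc_hom e1 e2 -> fc_hom e1 e3;
  fc_compA : forall e1 e2 e3 e4 (h : fc_hom e3 e4) (g : fc_hom e2 e3)
               (f : fc_hom e1 e2),
      fc_comp h (fc_comp g f) = fc_comp (fc_comp h g) f;
  fc_idl : forall e1 e2 (f : fc_hom e1 e2), fc_comp (fc_id e2) f = f;
  fc_idr : forall e1 e2 (f : fc_hom e1 e2), fc_comp f (fc_id e1) = f
}.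
Arguments fc_id {f} e : rename.
Arguments fc_comp {f e1 e2 e3} _ _ : rename.

(* One step of the relation generating the colimit of the representables
   D(U, G -) : for alpha : e -> e' in E, (e, phi) ~ (e', G(alpha) o phi). *)
Inductive colim_step {Ob : Type} (Hom : Ob -> Ob -> Type)
    (compD : forall a b c, Hom b c -> Hom a b -> Hom a c)
    (E : FinCat) (G0 : fc_ob E -> Ob)
    (G1 : forall e e', fc_hom e e' -> Hom (G0 e) (G0 e')) (U : Ob) :
    {e : fc_ob E & Hom U (G0 e)} -> {e : fc_ob E & Hom U (G0 e)} -> Prop :=
  | ColimStep e e' (al : fc_hom e e') (phi : Hom U (G0 e)) :
      colim_step compD G1 (existT _ e phi)
                 (existT _ e' (compD _ _ _ (G1 e e' al) phi)).

(* A presheaf Z (object part Z, action act : D(a,b) -> Z b -> Z a) on a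
   category D (objects Ob, morphisms Hom, identities idD, composition compD)
   is finitely generated iff Z is isomorphic to colim_{e in E} D(-, G e) for a
   finite category E and a functor G : E -> D.  The colimit of presheaves is
   computed objectwise as the quotient of  Sigma_e D(U, G e)  by the
   equivalence relation generated by colim_step; an isomorphism from it to Z
   is given by a natural family Phi_U of surjections whose kernel is exactly
   that equivalence relation. *)
Definition fin_generated {Ob : Type} (Hom : Ob -> Ob -> Type)
    (idD : forall a, Hom a a)
    (compD : forall a b c, Hom b c -> Hom a b -> Hom a c)
    (Z : Ob -> Type) (act : forall a b, Hom a b -> Z b -> Z a) : Prop :=
  exists (E : FinCat) (G0 : fc_ob E -> Ob)
         (G1 : forall e e', fc_hom e e' -> Hom (G0 e) (G0 e')),
    (forall e, G1 e e (fc_id e) = idD (G0 e)) /\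
    (forall e1 e2 e3 (g : fc_hom e2 e3) (f : fc_hom e1 e2),
        G1 e1 e3 (fc_comp g f) = compD _ _ _ (G1 e2 e3 g) (G1 e1 e2 f)) /\
    exists Phi : forall U, {e : fc_ob E & Hom U (G0 e)} -> Z U,
      (forall U (z : Z U), exists x, Phi U x = z) /\
      (forall U V (psi : Hom V U) (x : {e : fc_ob E & Hom U (G0 e)}),
          Phi V (existT _ (projT1 x) (compD _ _ _ (projT2 x) psi))
          = act V U psi (Phi U x)) /\
      (forall U (x y : {e : fc_ob E & Hom U (G0 e)}),
          Phi U x = Phi U y <-> clos_refl_sym_trans _ (@colim_step Ob Hom compD E G0 G1 U) x y).

Arguments fin_generated {Ob} Hom idD compD Z act.

Definition fin_pred {A : Type} (S : A -> Prop) : Prop :=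
  exists l : seq A, forall x, S x -> List.In x l.

Definition hda_fin_type {Ob : Type} (Hom : Ob -> Ob -> Type)
    (idD : forall a, Hom a a)
    (compD : forall a b c, Hom b c -> Hom a b -> Hom a c)
    (Z : Ob -> Type) (act : forall a b, Hom a b -> Z b -> Z a)
    (start accept : {U : Ob & Z U} -> Prop) : Prop :=
  fin_generated Hom idD compD Z act /\ fin_pred start /\ fin_pred accept.

Arguments hda_fin_type {Ob} Hom idD compD Z act start accept.

(* Encoding of a morphism (f, eps) : V -> U of box(Sigma), |U| = n:
   a sequence s of length n over option bool, with s_u = None iff u is in
   the image of f, and s_u = Some (eps u) otherwise.  f is then the unique
   increasing map onto the None-positions; letter preservation says that
   the letters of U at the None-positions spell V. *)
Definition keepmask (s : seq (option bool)) : bitseq := [seq o == None | o <- s].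
Definition kept {A : Type} (s : seq (option bool)) (U : seq A) : seq A :=
  mask (keepmask s) U.

Definition cube_hom (Sigma : finType) (V U : seq Sigma) :=
  {s : seq (option bool) | (size s == size U) && (kept s U == V)}.

(* composition (f,eps) o (g,eta): eps outside im f, eta o f^-1 on im f *)
Fixpoint ccomp (s t : seq (option bool)) : seq (option bool) :=
  match s with
  | [::] => [::]
  | Some b :: s' => Some b :: ccomp s' t
  | None :: s' => head None t :: ccomp s' (behead t)
  end.

Lemma ccomp_ok (A : Type) (s t : seq (option bool)) (U : seq A) :
  size s = size U -> size t = size (kept s U) ->
  size (ccomp s t) = size U /\ kept (ccomp s t) U = kept t (kept s U).
Proof.
rewrite /kept.
elim: s t U => [|o s IH] t [|u U] //=.
- by case: t.
- move=> [] Hs; case: o => [b|] /=.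
  + by move=> Ht; have [-> ->] := IH t U Hs Ht.
  + case: t => [|x t] //= [] Ht.
    have [-> H2] := IH t U Hs Ht; split => //.
    by case: (x == None); rewrite /= H2.
Qed.

Lemma cube_comp_proof (Sigma : finType) (W V U : seq Sigma)
  (f : cube_hom V U) (g : cube_hom W V) :
  (size (ccomp (val f) (val g)) == size U)
  && (kept (ccomp (val f) (val g)) U == W).
Proof.
case: f g => s Hsv [t Htw] /=.
case/andP: Hsv => /eqP Hs /eqP HV; case/andP: Htw => /eqP Ht /eqP HW.
have [-> ->] := ccomp_ok Hs (etrans Ht (esym (f_equal size HV))).
by rewrite HV HW !eqxx.
Qed.

Definition cube_comp (Sigma : finType) (W V U : seq Sigma)
  (f : cube_hom V U) (g : cube_hom W V) : cube_hom W U :=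
  exist _ (ccomp (val f) (val g)) (cube_comp_proof f g).

Lemma cube_id_proof (Sigma : finType) (U : seq Sigma) :
  (size (nseq (size U) (@None bool)) == size U)
  && (kept (nseq (size U) None) U == U).
Proof.
by rewrite size_nseq eqxx /kept /keepmask map_nseq /= mask_true.
Qed.

Definition cube_id (Sigma : finType) (U : seq Sigma) : cube_hom U U :=
  exist _ (nseq (size U) None) (cube_id_proof U).

(* the product category box(Sigma) x N^P  (N^P a one-object category) *)
Definition bhom (Sigma P : finType) (V U : seq Sigma) : Type :=
  (cube_hom V U * {ffun P -> nat})%type.

Definition bid (Sigma P : finType) (U : seq Sigma) : bhom P U U :=
  (cube_id U, [ffun=> 0]).

Definition bcomp (Sigma P : finType) (W V U : seq Sigma)
  (f : bhom P V U) (g : bhom P W V) : bhom P W U :=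
  (cube_comp f.1 g.1, [ffun p => f.2 p + g.2 p]).

(* A labelled Petri net with places P, transitions T, flow relation
   F = {(p,t) | pre p t} u {(t,p) | post t p}, labelling lam : T -> Sigma. *)
Record petri_net (Sigma : finType) := {
  pn_P : finType;
  pn_T : finType;
  pn_pre : pn_P -> pn_T -> bool;
  pn_post : pn_T -> pn_P -> bool;
  pn_lab : pn_T -> Sigma
}.

Section PetriPresheaf.
Variables (Sigma : finType) (N : petri_net Sigma).
Local Notation P := (pn_P N).
Local Notation T := (pn_T N).

Definition pn_a (t : T) : {ffun P -> nat} := [ffun p => nat_of_bool (pn_pre p t)].
Definition pn_b (t : T) : {ffun P -> nat} := [ffun p => nat_of_bool (pn_post t p)].

Definition Xob (U : seq Sigma) : Type :=
  {x : seq T * {ffun P -> nat} | map (@pn_lab _ N) x.1 == U}.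

Definition face_contrib (x : T * option bool) : {ffun P -> nat} :=
  match x.2 with
  | Some false => pn_a x.1
  | Some true => pn_b x.1
  | None => [ffun=> 0]
  end.

Definition Xact_raw (s : seq (option bool)) (w : {ffun P -> nat})
  (x : seq T * {ffun P -> nat}) : seq T * {ffun P -> nat} :=
  (kept s x.1,
   [ffun p => x.2 p + (\sum_(y <- zip x.1 s) face_contrib y p) + w p]).

Lemma Xact_proof (V U : seq Sigma) (m : bhom P V U) (x : Xob U) :
  map (@pn_lab _ N) (Xact_raw (val m.1) m.2 (val x)).1 == V.
Proof.
case: m x => [[s Hs] w] [[ts v] Hx] /=.
case/andP: Hs => _ /eqP <-; move/eqP: Hx => <-.
by rewrite /kept map_mask.
Qed.

Definition Xact (V U : seq Sigma) (m : bhom P V U) (x : Xob U) : Xob V :=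
  exist _ (Xact_raw (val m.1) m.2 (val x)) (Xact_proof m x).

Definition Xnac_ob (U : seq Sigma) : Type := {x : Xob U | uniq (val x).1}.

Lemma Xnac_proof (V U : seq Sigma) (m : bhom P V U) (x : Xnac_ob U) :
  uniq (val (Xact m (val x))).1.
Proof. by case: x => x /= Hx; rewrite /kept mask_uniq. Qed.

Definition Xnac_act (V U : seq Sigma) (m : bhom P V U) (x : Xnac_ob U) : Xnac_ob V :=
  exist _ (Xact m (val x)) (Xnac_proof m x).

Definition Xle_ob (d : nat) (U : seq Sigma) : Type := {x : Xob U | size (val x).1 <= d}.

Lemma Xle_proof (d : nat) (V U : seq Sigma) (m : bhom P V U) (x : Xle_ob d U) :
  size (val (Xact m (val x))).1 <= d.
Proof.
case: x => x /= Hx; apply: leq_trans Hx.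
by rewrite /kept size_subseq // mask_subseq.
Qed.

Definition Xle_act (d : nat) (V U : seq Sigma) (m : bhom P V U) (x : Xle_ob d U) :
  Xle_ob d V :=
  exist _ (Xact m (val x)) (Xle_proof m x).

End PetriPresheaf.

From Stdlib Require Import Relation_Operators.
From mathcomp Require Import all_boot.
From mathcomp Require Import zify.

Set Implicit Arguments.
Unset Strict Implicit.
Unset Printing Implicit Defensive.

(* Every element (t; v) of X is the image of the "generic" element (t; 0) of
   X(lambda(t)) under (id, v).  Both X_nac and X_{<=d} only contain transition
   sequences of bounded length (at most |T|, resp. d) and are closed under
   faces, so it suffices to treat any face-closed family Q of sequences of
   length at most M.  The generating category has as objects the pairs (t, c)
   with Q t and c <= M pointwise, standing for the elements (t; c); a morphism
   (t', c') -> (t, c) is a face s of t with t' = kept s t whose counter cost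
   c + (weight of s in t) is at most c', and it is sent to the morphism
   (s, c' - c - weight).  The weight bound keeps the category finite, and it is
   large enough to connect every representative (<t, c>, (s, w)) of an element
   to the canonical representative (<kept s t, 0>, (id, v)). *)

Lemma ccomp_nseql (s : seq (option bool)) : ccomp (nseq (size s) None) s = s.
Proof. by elim: s => [|x s IH] //=; rewrite IH. Qed.

Lemma ccomp_nseqr (s : seq (option bool)) k : ccomp s (nseq k None) = s.
Proof.
elim: s k => [|[b|] s IH] k //=; first by rewrite IH.
by case: k => [|k] /=; [rewrite (IH 0) | rewrite IH].
Qed.

Lemma ccompA (s t u : seq (option bool)) :
  count (pred1 None) s <= size t -> ccomp s (ccomp t u) = ccomp (ccomp s t) u.
Proof.
elim: s t u => [|[b|] s IH] t u //=; first by move=> H; rewrite IH.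
by case: t => [|[b|] t] //= H; rewrite IH.
Qed.

Lemma size_kept (A : Type) (s : seq (option bool)) (U : seq A) :
  size s = size U -> size (kept s U) = count (pred1 None) s.
Proof. by move=> H; rewrite /kept size_mask ?size_map // count_map. Qed.

Lemma kept_nseq (A : Type) (U : seq A) n : size U <= n -> kept (nseq n None) U = U.
Proof. by move=> H; rewrite /kept /keepmask map_nseq mask_true. Qed.

Lemma cube_id_eq_proof (Sigma : finType) (V U : seq Sigma) : V = U ->
  (size (nseq (size U) (@None bool)) == size U) && (kept (nseq (size U) None) U == V).
Proof. by move=> ->; exact: cube_id_proof. Qed.

Definition cube_id_eq (Sigma : finType) (V U : seq Sigma) (H : V = U) : cube_hom V U :=
  exist _ (nseq (size U) None) (cube_id_eq_proof H).

Lemma bhom_eq (Sigma P : finType) (V U : seq Sigma) (f g : bhom P V U) :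
  val f.1 = val g.1 -> f.2 =1 g.2 -> f = g.
Proof.
case: f g => [f1 f2] [g1 g2] /= H1 H2.
by rewrite (val_inj H1); congr pair; apply/ffunP.
Qed.

Section PetriAction.
Variables (Sigma : finType) (N : petri_net Sigma).
Local Notation P := (pn_P N).
Local Notation T := (pn_T N).

Definition face_sum (t : seq T) (s : seq (option bool)) (p : P) : nat :=
  \sum_(y <- zip t s) face_contrib y p.

Lemma face_sum_nseq t k p : face_sum t (nseq k None) p = 0.
Proof.
rewrite /face_sum; elim: t k => [|x t IH] [|k] /=; rewrite ?big_nil //.
by rewrite big_cons IH /face_contrib /= ffunE.
Qed.

Lemma face_sum_le_size t s p : face_sum t s p <= size t.
Proof.
rewrite /face_sum; apply: (@leq_trans (\sum_(y <- zip t s) 1)).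
  by apply: leq_sum => -[x [[]|]] _; rewrite /face_contrib /= ffunE ?leq_b1.
by rewrite sum1_size size_zip geq_minl.
Qed.

Lemma face_sum_ccomp (t : seq T) s u p : size s = size t ->
  face_sum t (ccomp s u) p = face_sum t s p + face_sum (kept s t) u p.
Proof.
rewrite /face_sum /kept.
elim: s t u => [|[b|] s IH] [|x t] u //=; first by case: u => [|? ?]; rewrite !big_nil.
- move=> [Hs]; by rewrite !big_cons IH //; lia.
- move=> [Hs]; case: u => [|o u] /=; last by rewrite !big_cons IH // /face_contrib /= !ffunE; lia.
  have zip_nil (A B : Type) (l : seq A) : zip l (@nil B) = [::] by case: l.
  by rewrite !big_cons IH // !zip_nil !big_nil /face_contrib /= !ffunE; lia.
Qed.

Lemma Xact_bcomp (W V U : seq Sigma) (phi : bhom P V U) (psi : bhom P W V) (x : Xob N U) :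
  val (Xact (bcomp phi psi) x) = val (Xact psi (Xact phi x)).
Proof.
case: phi psi x => [[s Hs] w1] [[t Ht] w2] [[tx vx] Hx] /=; rewrite /Xact_raw /=.
case/andP: Hs => /eqP Hs /eqP HV; case/andP: Ht => /eqP Ht /eqP HW.
move/eqP: Hx => Hx; subst U; rewrite size_map in Hs.
have Ht' : size t = size (kept s tx) by rewrite Ht -HV /kept -map_mask size_map.
have [_ ->] := ccomp_ok Hs Ht'.
congr pair; apply/ffunP => p; rewrite !ffunE.
have := face_sum_ccomp t p Hs; rewrite /face_sum /= => ->; lia.
Qed.

End PetriAction.

Lemma fin_generated_eq_act (Ob : Type) (Hom : Ob -> Ob -> Type) idD compD (Z : Ob -> Type)
  (act act' : forall a b, Hom a b -> Z b -> Z a) :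
  (forall a b m z, act a b m z = act' a b m z) ->
  fin_generated Hom idD compD Z act -> fin_generated Hom idD compD Z act'.
Proof.
move=> Hact [E [G0 [G1 [HG1 [HG2 [Phi [Hsurj [Hnat Hker]]]]]]]].
exists E, G0, G1; split=> //; split=> //; exists Phi; split=> //; split=> //.
by move=> U V psi x; rewrite -Hact.
Qed.

Section Generation.
Variables (Sigma : finType) (N : petri_net Sigma).
Local Notation P := (pn_P N).
Local Notation T := (pn_T N).
Local Notation lab := (@pn_lab _ N).
Variable Q : pred (seq T).
Hypothesis Q_mask : forall m t, Q t -> Q (mask m t).
Variable M : nat.
Hypothesis Q_size : forall t, Q t -> size t <= M.

Fixpoint seqs_upto n : seq (seq T) :=
  if n is n'.+1 then [::] :: [seq x :: s | x <- enum T, s <- seqs_upto n'] else [:: [::]].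

Lemma seqs_uptoP n t : size t <= n -> t \in seqs_upto n.
Proof.
elim: n t => [|n IH] [|x t] //= H.
by rewrite inE; apply/orP; right; apply: allpairs_f; [rewrite mem_enum | exact: IH].
Qed.

Definition ffuns_upto K : seq {ffun P -> nat} :=
  [seq [ffun p => nat_of_ord (f p)] | f : {ffun P -> 'I_K.+1} <- enum {ffun P -> 'I_K.+1}].

Lemma ffuns_uptoP K (c : {ffun P -> nat}) : (forall p, c p <= K) -> c \in ffuns_upto K.
Proof.
move=> H; apply/mapP; exists [ffun p => inord (c p) : 'I_K.+1]; first by rewrite mem_enum.
by apply/ffunP => p; rewrite !ffunE inordK // ltnS.
Qed.

Definition gens : seq (seq T * {ffun P -> nat}) :=
  [seq x <- [seq (t, c) | t <- seqs_upto M, c <- ffuns_upto M] | Q x.1].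

Lemma mem_gens t (c : {ffun P -> nat}) : Q t -> (forall p, c p <= M) -> (t, c) \in gens.
Proof.
move=> Ht Hc; rewrite mem_filter /= Ht /=.
by apply: allpairs_f; [exact: seqs_uptoP (Q_size Ht) | exact: ffuns_uptoP].
Qed.

Lemma gens_Q x : x \in gens -> Q x.1.
Proof. by rewrite mem_filter => /andP[]. Qed.

Definition gen_ob : finType := seq_sub gens.

Definition gen_hom_cond (a b : seq T * {ffun P -> nat}) (s : seq (option bool)) : bool :=
  (kept s b.1 == a.1) && [forall p, b.2 p + face_sum b.1 s p <= a.2 p].

Definition gen_hom (e e' : gen_ob) : finType :=
  {s : (size (ssval e').1).-tuple (option bool) | gen_hom_cond (ssval e) (ssval e') s}.

Lemma gen_hom_eq e e' (h h' : gen_hom e e') : tval (val h) = tval (val h') -> h = h'.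
Proof. by move=> H; do 2 apply: val_inj. Qed.

Lemma gen_id_cond (e : gen_ob) :
  gen_hom_cond (ssval e) (ssval e) (nseq (size (ssval e).1) None).
Proof.
rewrite /gen_hom_cond kept_nseq // eqxx /=; apply/forallP => p.
by rewrite face_sum_nseq addn0.
Qed.

Definition gen_id (e : gen_ob) : gen_hom e e :=
  exist _ (nseq_tuple (size (ssval e).1) None) (gen_id_cond e).

Section Composition.
Variables (e1 e2 e3 : gen_ob) (g : gen_hom e2 e3) (f : gen_hom e1 e2).

Lemma gen_comp_kept : size (ccomp (val g) (val f)) = size (ssval e3).1 /\
  kept (ccomp (val g) (val f)) (ssval e3).1 = (ssval e1).1.
Proof.
case: g f => [gs Hg] [fs Hf] /=.
case/andP: Hg => /eqP Hg _; case/andP: Hf => /eqP Hf _.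
have [-> ->] := ccomp_ok (size_tuple gs) (etrans (size_tuple fs) (f_equal size (esym Hg))).
by rewrite Hg Hf.
Qed.

Lemma gen_comp_size : size (ccomp (val g) (val f)) == size (ssval e3).1.
Proof. by case: gen_comp_kept => -> _. Qed.

Lemma gen_comp_cond : gen_hom_cond (ssval e1) (ssval e3) (ccomp (val g) (val f)).
Proof.
rewrite /gen_hom_cond; case: gen_comp_kept => _ ->; rewrite eqxx /=.
case: g f => [gs Hg] [fs Hf] /=.
case/andP: Hg => /eqP Hg /forallP Hg2; case/andP: Hf => /eqP Hf /forallP Hf2.
apply/forallP => p; rewrite face_sum_ccomp ?size_tuple // Hg addnA.
exact: leq_trans (leq_add (Hg2 p) (leqnn _)) (Hf2 p).
Qed.

Definition gen_comp : gen_hom e1 e3 := exist _ (Tuple gen_comp_size) gen_comp_cond.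

End Composition.

Lemma gen_compA (e1 e2 e3 e4 : gen_ob) (h : gen_hom e3 e4) (g : gen_hom e2 e3)
  (f : gen_hom e1 e2) : gen_comp h (gen_comp g f) = gen_comp (gen_comp h g) f.
Proof.
apply: gen_hom_eq => /=; apply: ccompA.
case: h => [hs Hh] /=; case/andP: Hh => /eqP Hh _.
by rewrite size_tuple -(size_kept (size_tuple hs)) Hh.
Qed.

Lemma gen_id_comp (e1 e2 : gen_ob) (f : gen_hom e1 e2) : gen_comp (gen_id e2) f = f.
Proof.
apply: gen_hom_eq => /=; case: f => fs Hf /=.
by rewrite -{1}(size_tuple fs) ccomp_nseql.
Qed.

Lemma gen_comp_id (e1 e2 : gen_ob) (f : gen_hom e1 e2) : gen_comp f (gen_id e1) = f.
Proof. by apply: gen_hom_eq => /=; rewrite ccomp_nseqr. Qed.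

Definition gen_cat : FinCat :=
  {| fc_ob := gen_ob; fc_hom := gen_hom; fc_id := gen_id; fc_comp := gen_comp;
     fc_compA := gen_compA; fc_idl := gen_id_comp; fc_idr := gen_comp_id |}.

Definition gen_word (e : gen_ob) : seq Sigma := map lab (ssval e).1.

Definition gen_weight (a b : seq T * {ffun P -> nat}) (s : seq (option bool)) :
  {ffun P -> nat} := [ffun p => a.2 p - (b.2 p + face_sum b.1 s p)].

Lemma gen_map_proof (e e' : gen_ob) (h : gen_hom e e') :
  (size (tval (val h)) == size (gen_word e')) && (kept (val h) (gen_word e') == gen_word e).
Proof.
case: h => hs Hh /=; case/andP: Hh => /eqP Hh _.
by rewrite /gen_word size_map size_tuple eqxx /= /kept -map_mask -/(kept hs _) Hh.
Qed.

Definition gen_map (e e' : gen_ob) (h : gen_hom e e') : bhom P (gen_word e) (gen_word e') :=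
  (exist _ (tval (val h)) (gen_map_proof h), gen_weight (ssval e) (ssval e') (val h)).

Lemma gen_map_id (e : gen_ob) : gen_map (gen_id e) = bid P (gen_word e).
Proof.
apply: bhom_eq => [|p]; first by rewrite /= /gen_word size_map.
by rewrite /= !ffunE face_sum_nseq addn0 subnn.
Qed.

Lemma gen_map_comp (e1 e2 e3 : gen_ob) (g : gen_hom e2 e3) (f : gen_hom e1 e2) :
  gen_map (gen_comp g f) = bcomp (gen_map g) (gen_map f).
Proof.
apply: bhom_eq => [//|p] /=; rewrite !ffunE.
case: g f => [gs Hg] [fs Hf] /=.
case/andP: Hg => /eqP Hg /forallP /(_ p); case/andP: Hf => _ /forallP /(_ p).
rewrite face_sum_ccomp ?size_tuple // Hg.
set a := (ssval e3).2 p; set b := (ssval e2).2 p; set c := (ssval e1).2 p.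
set x := face_sum _ gs p; set y := face_sum _ fs p; lia.
Qed.

Definition Xsub (U : seq Sigma) : Type := {x : Xob N U | Q (val x).1}.

Lemma Xsub_act_proof (V U : seq Sigma) (m : bhom P V U) (x : Xsub U) :
  Q (val (Xact m (val x))).1.
Proof. by case: x => x /= Hx; exact: Q_mask. Qed.

Definition Xsub_act (V U : seq Sigma) (m : bhom P V U) (x : Xsub U) : Xsub V :=
  exist _ (Xact m (val x)) (Xsub_act_proof m x).

Lemma Xsub_eq U (z z' : Xsub U) : val (val z) = val (val z') -> z = z'.
Proof. by move=> H; do 2 apply: val_inj. Qed.

Definition gen_elem (e : gen_ob) : Xsub (gen_word e) :=
  exist _ (exist _ (ssval e) (eqxx (gen_word e))) (gens_Q (ssvalP e)).

Lemma gen_map_elem (e e' : gen_ob) (h : gen_hom e e') :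
  Xsub_act (gen_map h) (gen_elem e') = gen_elem e.
Proof.
apply: Xsub_eq => /=; rewrite /Xact_raw /=.
case: h => hs /andP[/eqP Hh /forallP Hh2] /=.
case: (ssval e) Hh Hh2 => t v /= -> Hh2; congr pair; apply/ffunP => p; rewrite !ffunE.
by move: (Hh2 p); rewrite /face_sum /=; lia.
Qed.

Local Notation cocone U := {e : gen_ob & bhom P U (gen_word e)}.

Definition rep U (e : gen_ob) (phi : bhom P U (gen_word e)) : cocone U := existT _ e phi.

Lemma rep_eq U e (phi psi : bhom P U (gen_word e)) :
  val phi.1 = val psi.1 -> phi.2 =1 psi.2 -> rep phi = rep psi.
Proof. by move=> H1 H2; rewrite (bhom_eq H1 H2). Qed.

Definition colim_map U (x : cocone U) : Xsub U := Xsub_act (projT2 x) (gen_elem (projT1 x)).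

Definition colim_rel U : cocone U -> cocone U -> Prop :=
  clos_refl_sym_trans _ (@colim_step _ (bhom P) (bcomp (P:=P)) gen_cat gen_word gen_map U).

Lemma colim_rel_face t c t' c' (He : (t, c) \in gens) (He' : (t', c') \in gens)
    (s : seq (option bool)) U (psi : bhom P U (map lab t')) (phi : bhom P U (map lab t)) :
  size s = size t -> kept s t = t' -> (forall p, c p + face_sum t s p <= c' p) ->
  val phi.1 = ccomp s (val psi.1) ->
  (forall p, phi.2 p = c' p - (c p + face_sum t s p) + psi.2 p) ->
  colim_rel (rep (e := SeqSub He') psi) (rep (e := SeqSub He) phi).
Proof.
move=> Hs Hk Hc H1 H2.
have Hcond : gen_hom_cond (t', c') (t, c) s by rewrite /gen_hom_cond Hk eqxx; apply/forallP.
have Hs' : size s == size t by rewrite Hs.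
pose al : gen_hom (SeqSub He') (SeqSub He) := exist _ (Tuple Hs') Hcond.
rewrite (_ : rep (e := SeqSub He) phi = rep (bcomp (gen_map al) psi)); first exact/rst_step/ColimStep.
by apply: rep_eq => [|p] //=; rewrite !ffunE H2.
Qed.

Lemma canon_mem U (z : Xsub U) : ((val (val z)).1, [ffun=> 0]) \in gens.
Proof. by apply: mem_gens => [|p]; [exact: (valP z) | rewrite ffunE]. Qed.

Definition canon U (z : Xsub U) : cocone U :=
  rep (e := SeqSub (canon_mem z))
    (cube_id_eq (esym (eqP (valP (val z)))), (val (val z)).2).

Lemma colim_map_canon U (z : Xsub U) : colim_map (canon z) = z.
Proof.
apply: Xsub_eq; case: z => [[[u v] Hu] Qu] /=.
rewrite /Xact_raw /= kept_nseq; last by rewrite size_map.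
by congr pair; apply/ffunP => p; rewrite !ffunE -/(face_sum _ _ _) face_sum_nseq.
Qed.

(* The path: drop the counter c of <t, c> to 0, pull back along the face s of
   <t, 0> to <kept s t, weight of s>, and drop that weight to 0. *)
Lemma colim_rel_canon U (x : cocone U) : colim_rel x (canon (colim_map x)).
Proof.
case: x => -[[t c] He] phi; set s := val phi.1.
have Qt : Q t := gens_Q He.
have Hs : size s = size t by case/andP: (valP phi.1) => /eqP -> _; rewrite size_map.
have HU : U = map lab (kept s t).
  by case/andP: (valP phi.1) => _ /eqP <-; rewrite /kept map_mask.
have He0 : (t, [ffun=> 0]) \in gens by apply: mem_gens => // p; rewrite ffunE.
have Hes : (kept s t, [ffun p => face_sum t s p]) \in gens.
  apply: mem_gens => [|p]; first exact: Q_mask.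
  by rewrite ffunE (leq_trans (face_sum_le_size _ _ _) (Q_size Qt)).
pose phi0 : bhom P U (map lab t) := (phi.1, [ffun p => c p + phi.2 p]).
pose psi : bhom P U (map lab (kept s t)) := (cube_id_eq HU, phi0.2).
apply: (@rst_trans _ _ _ (rep (e := SeqSub He0) phi0)).
  apply: (@colim_rel_face _ _ _ _ _ _ (nseq (size t) None)) => [||p||p];
    rewrite ?size_nseq ?kept_nseq ?ffunE ?face_sum_nseq //.
  - by rewrite /= -Hs ccomp_nseql.
  - by rewrite subn0.
apply: (@rst_trans _ _ _ (rep (e := SeqSub Hes) psi)).
  apply/rst_sym/(@colim_rel_face _ _ _ _ _ _ s) => [||p||p] //; rewrite ?ffunE ?add0n //.
  - by rewrite /= ccomp_nseqr.
  - by rewrite subnn.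
apply: (@colim_rel_face _ _ _ _ _ _ (nseq (size (kept s t)) None)) => [||p||p];
  rewrite ?size_nseq ?kept_nseq ?ffunE ?face_sum_nseq //=.
- by rewrite ccomp_nseqr size_map.
- by rewrite -[\sum_(_ <- _) _]/(face_sum t s p) subn0; lia.
Qed.

Theorem Xsub_fin_generated :
  fin_generated (bhom P) (bid P) (bcomp (P:=P)) Xsub Xsub_act.
Proof.
exists gen_cat, gen_word, gen_map; split; first exact: gen_map_id.
split; first by move=> e1 e2 e3 g f; exact: gen_map_comp.
exists colim_map; split; [|split].
- by move=> U z; exists (canon z); exact: colim_map_canon.
- by move=> U V psi [e phi]; apply: Xsub_eq; exact: Xact_bcomp.
- move=> U x y; split=> [Hxy | ].
    apply: rst_trans (colim_rel_canon x) _; rewrite Hxy; exact/rst_sym/colim_rel_canon.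
  elim=> {x y} [x y [e e' al phi] | x | x y _ IH | x y z _ IH1 _ IH2] //; last by rewrite IH1.
  apply: Xsub_eq; have := Xact_bcomp (gen_map al) phi (val (gen_elem e')).
  by rewrite -[Xact (gen_map al) _]/(val (Xsub_act _ _)) gen_map_elem => <-.
Qed.

End Generation.

Lemma Xnac_fin_generated (Sigma : finType) (N : petri_net Sigma) :
  fin_generated (bhom (pn_P N)) (bid (pn_P N)) (bcomp (P:=pn_P N))
    (Xnac_ob N) (@Xnac_act Sigma N).
Proof.
have uniq_mask m (t : seq (pn_T N)) : uniq t -> uniq (mask m t) by move=> /mask_uniq.
have uniq_size (t : seq (pn_T N)) : uniq t -> size t <= #|pn_T N|.
  by move=> Ht; rewrite cardE; apply: uniq_leq_size => // x; rewrite mem_enum.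
apply: fin_generated_eq_act (@Xsub_fin_generated Sigma N (fun t => uniq t) uniq_mask _ uniq_size).
by move=> a b m z; apply: val_inj.
Qed.

Lemma Xle_fin_generated (Sigma : finType) (N : petri_net Sigma) (d : nat) :
  fin_generated (bhom (pn_P N)) (bid (pn_P N)) (bcomp (P:=pn_P N))
    (Xle_ob N d) (@Xle_act Sigma N d).
Proof.
have size_mask_le m (t : seq (pn_T N)) : size t <= d -> size (mask m t) <= d.
  by move=> Ht; apply: leq_trans Ht; rewrite size_subseq // mask_subseq.
apply: fin_generated_eq_act (@Xsub_fin_generated Sigma N (fun t => size t <= d) size_mask_le d (fun _ H => H)).
by move=> a b m z; apply: val_inj.
Qed.

Theorem proposition17 (Sigma : finType) (N : petri_net Sigma) :
  fin_generated (@bhom Sigma (pn_P N)) (@bid Sigma (pn_P N)) (@bcomp Sigma (pn_P N))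
    (Xnac_ob N) (@Xnac_act Sigma N)
  /\ (forall d : nat, 1 <= d ->
        fin_generated (@bhom Sigma (pn_P N)) (@bid Sigma (pn_P N))
          (@bcomp Sigma (pn_P N)) (Xle_ob N d) (@Xle_act Sigma N d))
  /\ (forall start accept : {U : seq Sigma & Xnac_ob N U} -> Prop,
        fin_pred start -> fin_pred accept ->
        hda_fin_type (@bhom Sigma (pn_P N)) (@bid Sigma (pn_P N))
          (@bcomp Sigma (pn_P N)) (Xnac_ob N) (@Xnac_act Sigma N) start accept)
  /\ (forall d : nat, 1 <= d ->
        forall start accept : {U : seq Sigma & Xle_ob N d U} -> Prop,
        fin_pred start -> fin_pred accept ->
        hda_fin_type (@bhom Sigma (pn_P N)) (@bid Sigma (pn_P N))
          (@bcomp Sigma (pn_P N)) (Xle_ob N d) (@Xle_act Sigma N d) start accept).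
Proof.
split; first exact: Xnac_fin_generated.
split; first by move=> d _; exact: Xle_fin_generated.
split; first by move=> start accept Hs Ha; split; first exact: Xnac_fin_generated.
by move=> d _ start accept Hs Ha; split; first exact: Xle_fin_generated.
Qed.
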